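(* There exist absolute constants $C>0$ and $n_0$ such that for all $n\ge n_0$ and all integers $1\le k\le n/\log n$ with $nk$ even, every random graph $\mathcal G$ on vertex set $[n]$ whose law is supported on the set of $k$-regular simple graphs satisfies $$\mathcal B(\mathcal G)\le C\,kn\log(n/k).$$
   Context: A random graph $\mathcal G$ on $[n]$ is identified with the random vector of edge indicators $(e^{ij})_{1\le i<j\le n}\in\{0,1\}^{\binom n2}$. For a random vector $x=(x^1,\dots,x^m)$ on a finite product set, the dual total correlation is $\mathcal B(x)=\mathcal H(x)-\sum_{i=1}^m\mathcal H(x^i\mid x^{-i})$, with $\mathcal H$ Shannon entropy and $x^{-i}$ the vector with coordinate $i$ removed. *)

From HB Require Import structures.
From mathcomp Require Import all_boot all_order all_algebra.
From mathcomp Require Import all_classical all_reals.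
From mathcomp Require Import Rstruct exp.
Set Implicit Arguments. Unset Strict Implicit. Unset Printing Implicit Defensive.
Import Order.TTheory GRing.Theory Num.Theory.
Local Open Scope ring_scope.

Notation RR := Rdefinitions.R.

Definition edge (n : nat) := {p : 'I_n * 'I_n | (p.1 < p.2)%N}.

(* A graph on [n] = its vector of edge indicators (e^{ij})_{i<j}. *)
Definition graph (n : nat) := {ffun edge n -> bool}.

Definition degree (n : nat) (g : graph n) (v : 'I_n) : nat :=
  #|[set e : edge n | g e && (((val e).1 == v) || ((val e).2 == v))]|.

Definition regular (n k : nat) (g : graph n) : Prop :=
  forall v : 'I_n, degree g v = k.

Definition is_distr (T : finType) (p : {ffun T -> RR}) : Prop :=
  (forall x, 0 <= p x) /\ \sum_x p x = 1.

Definition entropy (T : finType) (p : {ffun T -> RR}) : RR :=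
  - \sum_x (if p x == 0 then 0 else p x * ln (p x)).

(* For a random vector x in {ffun I -> A}, the law of x^{-i}, evaluated at
   the restriction of x to I \ {i}: P(x^{-i} = y^{-i}). *)
Definition marg_off (I A : finType) (p : {ffun {ffun I -> A} -> RR}) (i : I)
  (y : {ffun I -> A}) : RR :=
  \sum_(z : {ffun I -> A} | [forall j, (j != i) ==> (z j == y j)]) p z.

Definition cond_entropy_coord (I A : finType) (p : {ffun {ffun I -> A} -> RR})
  (i : I) : RR :=
  - \sum_y (if p y == 0 then 0 else p y * ln (p y / marg_off p i y)).

Definition dual_total_correlation (I A : finType)
  (p : {ffun {ffun I -> A} -> RR}) : RR :=
  entropy p - \sum_i cond_entropy_coord p i.

(* A k-regular graph is determined by all of its edges but one: toggling a
   single edge changes the degree of its endpoints.  Hence every conditional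
   entropy H(e^{ij} | rest) vanishes and B(G) = H(G), which is at most the log
   of the number of k-regular graphs.  Recording the neighbourhood of every
   vertex injects these graphs into the n-tuples of k-subsets of [n], so
   H(G) <= n ln C(n,k) <= nk (1 + ln (n/k)); finally k <= n / ln n forces
   n/k >= 2, so the additive 1 is absorbed into a constant multiple of ln (n/k). *)

From HB Require Import structures.
From mathcomp Require Import all_boot all_order all_algebra.
From mathcomp Require Import all_classical all_reals.
From mathcomp Require Import Rstruct sequences exp.
From mathcomp Require Import zify ring lra.
Set Implicit Arguments. Unset Strict Implicit. Unset Printing Implicit Defensive.
Import Order.TTheory GRing.Theory Num.Theory.
Local Open Scope ring_scope.

Section RegularGraphs.
Variable n : nat.
Implicit Types (g : graph n) (v : 'I_n) (e : edge n).

Definition is_end v e := ((val e).1 == v) || ((val e).2 == v).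

Definition incident g v : {set edge n} := [set e | g e && is_end v e].

Lemma degreeE g v : degree g v = #|incident g v|. Proof. by []. Qed.

Lemma degreeS_off_edge g1 g2 e :
  (forall f, f != e -> g1 f = g2 f) -> g1 e -> ~~ g2 e ->
  degree g1 (val e).1 = (degree g2 (val e).1).+1.
Proof.
move=> g12 g1e g2e; rewrite !degreeE.
have -> : incident g1 (val e).1 = e |: incident g2 (val e).1.
  apply/setP => f; rewrite !inE.
  by have [->|/g12->] := eqVneq f e; rewrite ?g1e /is_end ?eqxx.
by rewrite cardsU1 inE (negbTE g2e).
Qed.

Lemma regular_eq_off_edge k g1 g2 e : regular k g1 -> regular k g2 ->
  (forall f, f != e -> g1 f = g2 f) -> g1 = g2.
Proof.
move=> reg1 reg2 g12; apply/ffunP => f.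
have [->|/g12//] := eqVneq f e.
have g21 f' : f' != e -> g2 f' = g1 f' by move/g12.
case E1: (g1 e); case E2: (g2 e) => //.
  by have := degreeS_off_edge g12; rewrite E1 E2 reg1 reg2 => /(_ isT isT); lia.
by have := degreeS_off_edge g21; rewrite E1 E2 reg1 reg2 => /(_ isT isT); lia.
Qed.

Definition other_end v e := if (val e).1 == v then (val e).2 else (val e).1.

Lemma other_end_inj v : {in is_end v &, injective (other_end v)}.
Proof.
move=> [[a b] ab] [[c d] cd]; rewrite /in_mem /= /is_end /other_end /= => ev fv eq.
apply: val_inj => /=; move: ab cd ev fv eq.
case: (eqVneq a v) => [->|av]; case: (eqVneq c v) => [->|cv] //= ab cd.
- by move=> _ _ ->.
- by move=> _ /eqP dv bc; move: cd; rewrite dv -bc; lia.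
- by move=> /eqP bv _ ad; move: ab; rewrite bv ad; lia.
- by move=> /eqP-> /eqP-> ->.
Qed.

Definition neighbours g : {ffun 'I_n -> {set 'I_n}} :=
  [ffun v => other_end v @: incident g v].

Lemma card_neighbours k g v : regular k g -> #|neighbours g v| = k.
Proof.
move=> reg; rewrite ffunE card_in_imset; first exact: reg.
by move=> e f; rewrite !inE => /andP[_ ev] /andP[_ fv]; apply: other_end_inj.
Qed.

Lemma mem_neighbours g e : ((val e).2 \in neighbours g (val e).1) = g e.
Proof.
rewrite ffunE; apply/imsetP/idP => [[f]|ge]; last first.
  by exists e; rewrite ?inE ?ge /is_end /other_end eqxx.
rewrite inE => /andP[gf fv] ef.
suff -> : e = f by [].
apply: (@other_end_inj (val e).1) => //; first by rewrite /in_mem /= /is_end eqxx.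
by rewrite -ef /other_end eqxx.
Qed.

Lemma neighbours_inj : injective neighbours.
Proof. by move=> g1 g2 eq12; apply/ffunP => e; rewrite -!mem_neighbours eq12. Qed.

Lemma card_regular_le k (A : {set graph n}) :
  {in A, forall g, regular k g} -> (#|A| <= 'C(n, k) ^ n)%N.
Proof.
move=> regA; rewrite -(card_imset _ neighbours_inj).
have sub : neighbours @: A \subset ffun_on [set S : {set 'I_n} | #|S| == k].
  apply/fintype.subsetP => _ /imsetP[g /regA reg ->].
  by apply/ffun_onP => v; rewrite inE (card_neighbours v reg).
by rewrite (leq_trans (subset_leq_card sub)) // card_ffun_on card_draws !card_ord.
Qed.

End RegularGraphs.

Lemma ffact_le_expn n k : (n ^_ k <= n ^ k)%N.
Proof.
rewrite ffact_prod; apply: (@leq_trans (\prod_(i < k) n)).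
  by apply: leq_prod => i _; rewrite leq_subr.
by rewrite prod_nat_const card_ord.
Qed.

Section RealBounds.
Variable R : realType.

Lemma ln_le_subr1 (x : R) : 0 < x -> ln x <= x - 1.
Proof.
move=> x_gt0; have := @le_ln1Dx R (x - 1); rewrite addrCA subrr addr0.
by apply; lra.
Qed.

Lemma pow_div_fact_le_expR (x : R) k : 0 <= x -> x ^+ k / k`!%:R <= expR x.
Proof.
case: k => [|k] x_ge0; first by rewrite expr0 divr1; have := expR_ge1Dx x; lra.
by have := expR_ge1Dxn k x_ge0; lra.
Qed.

Lemma ln_binomial_le n k : (0 < k)%N -> (k <= n)%N ->
  ln ('C(n, k)%:R : R) <= k%:R * (1 + ln (n%:R / k%:R)).
Proof.
move=> k_gt0 le_kn; set c : R := 'C(n, k)%:R.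
have c_gt0 : 0 < c by rewrite ltr0n bin_gt0.
have k_pos : 0 < k%:R :> R by rewrite ltr0n.
have n_pos : 0 < n%:R :> R by rewrite ltr0n (leq_trans k_gt0).
have fact_gt0 : 0 < k`!%:R :> R by rewrite ltr0n fact_gt0.
have c_le : c <= (n%:R / k%:R) ^+ k * expR k%:R.
  apply: le_trans (ler_wpM2l _ (pow_div_fact_le_expR k (ltW k_pos))); last first.
    by rewrite exprn_ge0 // divr_ge0 ?ltW.
  rewrite expr_div_n mulrA divfK ?expf_neq0 ?gt_eqF // ler_pdivlMr //.
  by rewrite -natrM -natrX ler_nat bin_ffact ffact_le_expn.
have ratio_gt0 : 0 < n%:R / k%:R :> R by rewrite divr_gt0.
rewrite -(ler_ln (x := c)) ?posrE ?mulr_gt0 ?exprn_gt0 ?expR_gt0 // in c_le.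
rewrite (le_trans c_le) // lnM ?posrE ?exprn_gt0 ?expR_gt0 // lnXn // expRK.
by rewrite mulrDr mulr1 addrC -[ln _ *+ _]mulr_natl.
Qed.

Lemma half_le_ln2 : 2^-1 <= ln (2 : R).
Proof.
by have := @ln_le_subr1 2^-1; rewrite lnV ?posrE // invr_gt0 ltr0n => /(_ isT); lra.
Qed.

Lemma ln_nat_ge2 n : (16 <= n)%N -> 2 <= ln (n%:R : R).
Proof.
move=> n_ge16; apply: (@le_trans _ _ (ln (2 ^+ 4 : R))).
  by rewrite lnXn //; have := half_le_ln2; lra.
rewrite ler_ln ?posrE ?exprn_gt0 ?ltr0n ?(leq_trans _ n_ge16) //.
have : 16%:R <= n%:R :> R by rewrite ler_nat.
lra.
Qed.

Lemma double_le_of_le_div_ln n k : (16 <= n)%N ->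
  k%:R <= n%:R / ln (n%:R : R) -> 2 * k%:R <= n%:R :> R.
Proof.
move=> n_ge16; have lnn_ge2 := ln_nat_ge2 n_ge16.
rewrite ler_pdivlMr; last by apply: lt_le_trans lnn_ge2.
by apply: le_trans; rewrite mulrC ler_wpM2l ?ler0n.
Qed.

End RealBounds.

Definition supp (T : finType) (p : {ffun T -> RR}) : {set T} := [set x | p x != 0].

Lemma supp_gt0 (T : finType) (p : {ffun T -> RR}) : is_distr p -> (0 < #|supp p|)%N.
Proof.
move=> [_ p1]; rewrite lt0n; apply/eqP => /cards0_eq supp0; move: p1.
rewrite big1 => [/eqP|x _]; first by rewrite eq_sym oner_eq0.
have : x \notin supp p by rewrite supp0 inE.
by rewrite inE negbK => /eqP.
Qed.

(* Gibbs: [ln y <= y - 1] at [y = 1 / (N p x)] bounds each term of the entropy. *)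
Lemma entropy_le_ln_card_supp (T : finType) (p : {ffun T -> RR}) :
  is_distr p -> entropy p <= ln #|supp p|%:R.
Proof.
move=> pd; have [p_ge0 p1] := pd; set N : RR := #|supp p|%:R.
have N_gt0 : 0 < N by rewrite ltr0n supp_gt0.
rewrite /entropy -sumrN.
apply: (@le_trans _ _ (\sum_x ((if x \in supp p then N^-1 else 0) - p x + p x * ln N))).
  apply: ler_sum => x _; rewrite inE.
  have [->|px_neq0] := eqVneq (p x) 0; first by rewrite /= !(mul0r, oppr0, addr0).
  have px_gt0 : 0 < p x by rewrite lt0r px_neq0 p_ge0.
  have Npx_gt0 : 0 < N * p x by rewrite mulr_gt0.
  have := @ln_le_subr1 _ (N * p x)^-1; rewrite invr_gt0 lnV ?posrE // lnM ?posrE //.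
  move=> /(_ Npx_gt0) ln_le.
  have := ler_wpM2l (ltW px_gt0) ln_le.
  have -> : p x * ((N * p x)^-1 - 1) = N^-1 - p x.
    by rewrite mulrBr mulr1 invfM mulrCA mulfV ?mulr1 ?gt_eqF.
  rewrite mulrN mulrDr /=; lra.
rewrite !big_split /= sumrN -mulr_suml p1 mul1r -big_mkcond sumr_const.
by rewrite -mulr_natr mulVf ?gt_eqF // subrr add0r.
Qed.

Section RigidSupport.
Variables (I A : finType) (p : {ffun {ffun I -> A} -> RR}).

Lemma cond_entropy_coord_rigid (i : I) :
  {in supp p &, forall x y : {ffun I -> A},
     (forall j, j != i -> x j = y j) -> x = y} ->
  cond_entropy_coord p i = 0.
Proof.
move=> rigid; rewrite /cond_entropy_coord big1 ?oppr0 // => y _.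
have [//|py_neq0] := eqVneq (p y) 0.
suff -> : marg_off p i y = p y by rewrite divff // ln1 mulr0.
rewrite /marg_off (bigD1 y) /=; last by apply/forallP => j; apply/implyP.
rewrite big1 ?addr0 // => z /andP[/forallP z_off_i z_neq_y].
apply: contraNeq z_neq_y => pz_neq0; apply/eqP.
by apply: rigid; rewrite ?inE // => j /(implyP (z_off_i j)) /eqP.
Qed.

Lemma dual_total_correlation_rigid :
  (forall i, {in supp p &, forall x y : {ffun I -> A},
                (forall j, j != i -> x j = y j) -> x = y}) ->
  dual_total_correlation p = entropy p.
Proof.
move=> rigid; rewrite /dual_total_correlation big1 ?subr0 // => i _.
exact: cond_entropy_coord_rigid.
Qed.

End RigidSupport.

Theorem proposition3 :
  exists (C : RR) (n0 : nat), 0 < C /\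
    forall (n k : nat), (n0 <= n)%N -> (1 <= k)%N ->
      (k%:R <= n%:R / ln (n%:R : RR)) -> ~~ odd (n * k) ->
      forall p : {ffun graph n -> RR},
        is_distr p ->
        (forall g : graph n, p g != 0 -> regular k g) ->
        dual_total_correlation p <= C * (k%:R * n%:R * ln (n%:R / k%:R)).
Proof.
(* The parity of nk only guarantees that k-regular graphs exist. *)
exists 3, 16%N; split=> // n k n_ge16 k_gt0 k_le _ p p_distr p_reg.
have n_pos : 0 < n%:R :> RR by rewrite ltr0n (leq_trans _ n_ge16).
have k_pos : 0 < k%:R :> RR by rewrite ltr0n.
have two_k_le_n := double_le_of_le_div_ln n_ge16 k_le.
have le_kn : (k <= n)%N by rewrite -(ler_nat RR); lra.
have ln_ratio_ge : 2^-1 <= ln (n%:R / k%:R) :> RR.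
  apply: le_trans (half_le_ln2 RR) _.
  by rewrite ler_ln ?posrE ?divr_gt0 ?ler_pdivlMr //; lra.
rewrite dual_total_correlation_rigid; last first.
  move=> e g1 g2; rewrite !inE => /p_reg reg1 /p_reg reg2.
  exact: regular_eq_off_edge.
apply: (le_trans (entropy_le_ln_card_supp p_distr)).
apply: (@le_trans _ _ (n%:R * ln ('C(n, k)%:R))).
  rewrite mulr_natl -lnXn ?ltr0n ?bin_gt0 // -natrX.
  rewrite ler_ln ?posrE ?ltr0n ?supp_gt0 ?expn_gt0 ?bin_gt0 ?le_kn //.
  by rewrite ler_nat card_regular_le // => g /[1!inE] /p_reg.
apply: (le_trans (ler_wpM2l (ltW n_pos) (ln_binomial_le RR k_gt0 le_kn))).
have -> : 3 * (k%:R * n%:R * ln (n%:R / k%:R))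
          = n%:R * (k%:R * (3 * ln (n%:R / k%:R))) :> RR by ring.
by rewrite !ler_wpM2l ?ler0n //; lra.
Qed.
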